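(* Let $\gamma=\begin{pmatrix}A&B\\C&D\end{pmatrix}\in\mathbf{Sp}(2n,\mathbb R)$ with $\gamma\tau(\gamma)=I$ and $C=0$. Then there exists $h\in\mathbf{Sp}(2n,\mathbb R)$ with $\gamma=\tau(h)h^{-1}$ (i.e. the 1-cocycle $f_\gamma$ is cohomologically trivial).
   Context: $\mathbf{Sp}(2n,\mathbb R)$: real $2n\times2n$ matrices $g=\begin{pmatrix}A&B\\C&D\end{pmatrix}$ ($n\times n$ blocks) with ${}^tgJg=J$, $J=\begin{pmatrix}0&I\\-I&0\end{pmatrix}$. $\tau\begin{pmatrix}A&B\\C&D\end{pmatrix}=\begin{pmatrix}A&-B\\-C&D\end{pmatrix}$. $f_\gamma$ denotes the cocycle $\mathrm{Gal}(\mathbb C/\mathbb R)=\{1,\tau\}\to\mathbf{Sp}(2n,\mathbb R)$, $\tau\mapsto\gamma$. *)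

From mathcomp Require Import all_boot all_order all_algebra.
From mathcomp Require Import reals.
Set Implicit Arguments. Unset Strict Implicit. Unset Printing Implicit Defensive.
Import GRing.Theory Num.Theory.
Local Open Scope ring_scope.

(* 2n x 2n real matrices are 'M[R]_(n + n), with n x n blocks
   g = block_mx A B C D, A = ulsubmx g, B = ursubmx g, C = dlsubmx g, D = drsubmx g. *)

Definition Jmx (R : realType) (n : nat) : 'M[R]_(n + n) :=
  block_mx 0 1%:M (- 1%:M) 0.

Definition symplectic (R : realType) (n : nat) (g : 'M[R]_(n + n)) : Prop :=
  g^T *m Jmx R n *m g = Jmx R n.

Definition tau (R : realType) (n : nat) (g : 'M[R]_(n + n)) : 'M[R]_(n + n) :=
  block_mx (ulsubmx g) (- ursubmx g) (- dlsubmx g) (drsubmx g).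

(* Write gamma = [[A, B], [0, D]].  The two hypotheses force A^2 = 1, D = A^T
   and A B symmetric.  The unipotent symplectic k = [[1, -AB/2], [0, 1]]
   satisfies tau(k) g0 = gamma k with g0 = diag(A, A^T), so it suffices to
   split g0.  For this take h0 = [[p, q G^-1], [-q^T G, p^T]], where
   p = (1 + A)/2 and q = (1 - A)/2 are the eigenprojections of the involution A
   and G = 1 + A^T A.  Then tau(h0) = g0 h0 because A acts by +1 on p and by -1
   on q, and h0 is symplectic because G is positive definite, hence invertible,
   and G A = A^T G.  Finally h = k h0 gives tau(h) = gamma h. *)

From mathcomp Require Import all_boot all_order all_algebra.
From mathcomp Require Import reals.
Set Implicit Arguments. Unset Strict Implicit. Unset Printing Implicit Defensive.
Import GRing.Theory Num.Theory.
Local Open Scope ring_scope.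

Lemma scale_halfD (R : numFieldType) (V : lmodType R) (v : V) : 2^-1 *: (v + v) = v.
Proof. by rewrite scalerDr -scalerDl -[2^-1]mul1r -splitr scale1r. Qed.

Section PositiveDefinite.
Variable R : realFieldType.

Lemma mulmx_trmx_row_ge0 n (x : 'rV[R]_n) : 0 <= (x *m x^T) 0 0.
Proof. by rewrite mxE; apply: sumr_ge0 => i _; rewrite mxE -expr2 sqr_ge0. Qed.

Lemma mulmx_trmx_row_eq0 n (x : 'rV[R]_n) : ((x *m x^T) 0 0 == 0) = (x == 0).
Proof.
apply/idP/eqP => [|->]; last by rewrite mul0mx mxE.
rewrite mxE psumr_eq0 => [/allP x0|i _]; last by rewrite mxE -expr2 sqr_ge0.
apply/rowP => j; have /implyP := x0 j (mem_index_enum j).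
by rewrite mxE -expr2 sqrf_eq0 mxE => /(_ isT)/eqP.
Qed.

Lemma unitmx_1_add_gram n (A : 'M[R]_n) : 1%:M + A^T *m A \in unitmx.
Proof.
rewrite -row_free_unit; apply: inj_row_free => v vG0.
have : (v *m v^T + (v *m A^T) *m (v *m A^T)^T) 0 0 == 0.
  have -> : v *m v^T + v *m A^T *m (v *m A^T)^T = v *m (1%:M + A^T *m A) *m v^T.
    by rewrite trmx_mul trmxK mulmxDr mulmx1 mulmxDl !mulmxA.
  by rewrite vG0 mul0mx mxE.
rewrite mxE paddr_eq0 ?mulmx_trmx_row_ge0 // mulmx_trmx_row_eq0.
by case/andP => /eqP.
Qed.

End PositiveDefinite.

Section Symplectic.
Variables (R : realType) (n : nat).
Implicit Types (X Y Z W : 'M[R]_n) (g h : 'M[R]_(n + n)).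

Lemma symplectic_block X Y Z W :
  symplectic (block_mx X Y Z W) <->
  [/\ X^T *m Z = Z^T *m X, Y^T *m W = W^T *m Y & X^T *m W - Z^T *m Y = 1%:M].
Proof.
have skew : Y^T *m Z - W^T *m X = - (X^T *m W - Z^T *m Y)^T.
  by rewrite linearB /= !trmx_mul !trmxK opprB.
rewrite /symplectic /Jmx -mulmxA mulmx_block tr_block_mx mulmx_block.
rewrite !mul0mx !mulNmx !mul1mx !add0r !addr0 !mulmxN skew.
split=> [/eq_block_mx[/eqP + -> _ /eqP]|[-> -> ->]].
  by rewrite !subr_eq0 => /eqP-> /eqP->.
by rewrite !subrr tr_scalar_mx.
Qed.

Lemma symplecticM g h : symplectic g -> symplectic h -> symplectic (g *m h).
Proof.
rewrite /symplectic => sg sh.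
by rewrite trmx_mul -!mulmxA [g^T *m _]mulmxA [g^T *m _ *m _]mulmxA sg mulmxA.
Qed.

Lemma trmx_Jmx_mul : (Jmx R n)^T *m Jmx R n = 1%:M.
Proof.
rewrite /Jmx tr_block_mx mulmx_block !trmx0 !mul0mx !mulmx0 !add0r !addr0.
by rewrite !raddfN /= mulNmx opprK trmx1 !mulmx1 -scalar_mx_block.
Qed.

Lemma symplectic_unitmx g : symplectic g -> g \in unitmx.
Proof.
move=> sg; have : ((Jmx R n)^T *m g^T *m Jmx R n) *m g = 1%:M.
  by rewrite -!mulmxA (mulmxA g^T) sg trmx_Jmx_mul.
by case/mulmx1_unit.
Qed.

Lemma tau_block X Y Z W : tau (block_mx X Y Z W) = block_mx X (- Y) (- Z) W.
Proof. by rewrite /tau block_mxKul block_mxKur block_mxKdl block_mxKdr. Qed.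

Lemma tauM g h : tau (g *m h) = tau g *m tau h.
Proof.
rewrite -[g]submxK -[h]submxK mulmx_block !tau_block mulmx_block.
by rewrite !mulNmx !mulmxN !opprK !opprD.
Qed.

Lemma symplectic_unipotent (Q : 'M[R]_n) :
  Q^T = Q -> symplectic (block_mx 1%:M Q 0 1%:M).
Proof.
move=> sQ; apply/symplectic_block.
by rewrite sQ !trmx1 trmx0 !mulmx1 !mul1mx mul0mx subr0.
Qed.

End Symplectic.

Section Involution.
Variables (R : realType) (n : nat) (A : 'M[R]_n).
Hypothesis AA : A *m A = 1%:M.

Let p := 2^-1 *: (1%:M + A).
Let q := 2^-1 *: (1%:M - A).
Let G := 1%:M + A^T *m A.

Let Ap : A *m p = p. Proof. by rewrite -scalemxAr mulmxDr mulmx1 AA addrC. Qed.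
Let pA : p *m A = p. Proof. by rewrite -scalemxAl mulmxDl mul1mx AA addrC. Qed.
Let Aq : A *m q = - q. Proof. by rewrite -scalemxAr mulmxBr mulmx1 AA -scalerN opprB. Qed.
Let qA : q *m A = - q. Proof. by rewrite -scalemxAl mulmxBl mul1mx AA -scalerN opprB. Qed.
Let pp : p *m p = p. Proof. by rewrite {1}/p -scalemxAl mulmxDl mul1mx Ap scale_halfD. Qed.
Let qq : q *m q = q. Proof. by rewrite {1}/q -scalemxAl mulmxBl mul1mx Aq opprK scale_halfD. Qed.
Let pq : p *m q = 0. Proof. by rewrite {1}/p -scalemxAl mulmxDl mul1mx Aq subrr scaler0. Qed.
Let qp : q *m p = 0. Proof. by rewrite {1}/q -scalemxAl mulmxBl mul1mx Ap subrr scaler0. Qed.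
Let pDq : p + q = 1%:M. Proof. by rewrite -scalerDr addrACA subrr addr0 scale_halfD. Qed.

Let trG : G^T = G. Proof. by rewrite raddfD /= trmx1 trmx_mul trmxK. Qed.

Let GA : G *m A = A^T *m G.
Proof.
have AtAt : A^T *m A^T = 1%:M by rewrite -trmx_mul AA trmx1.
by rewrite mulmxDl mulmxDr mul1mx mulmx1 -mulmxA AA mulmxA AtAt mul1mx mulmx1 addrC.
Qed.

Let Gq : G *m q = q^T *m G.
Proof.
rewrite /q !linearZ /= -scalemxAl mulmxBr mulmx1 GA [(_ - A)^T]raddfB /=.
by rewrite trmx1 mulmxBl mul1mx.
Qed.

Lemma diag_involution_coboundary :
  exists2 h : 'M[R]_(n + n), symplectic h & tau h = block_mx A 0 0 A^T *m h.
Proof.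
have Gu : G \in unitmx := unitmx_1_add_gram A.
exists (block_mx p (q *m invmx G) (- (q^T *m G)) p^T).
  apply/symplectic_block; split.
  - rewrite mulmxN mulmxA -trmx_mul qp trmx0 mul0mx [(- _)^T]raddfN /=.
    by rewrite trmx_mul trmxK mulNmx -mulmxA qp mulmx0 oppr0.
  - by rewrite trmx_mul -mulmxA -trmx_mul pq trmx0 mulmx0 trmxK mulmxA pq mul0mx.
  rewrite -trmx_mul pp [(- _)^T]raddfN /= trmx_mul trmxK trG mulNmx opprK.
  by rewrite mulmxA -(mulmxA G) qq Gq -mulmxA mulmxV // mulmx1 -raddfD /= pDq trmx1.
rewrite tau_block mulmx_block !mul0mx !addr0 !add0r Ap mulmxA Aq mulNmx.
by rewrite mulmxN mulmxA -trmx_mul qA [(- q)^T]raddfN /= mulNmx -trmx_mul pA.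
Qed.

End Involution.

Section UpperTriangular.
Variables (R : realType) (n : nat).
Implicit Types (A B D : 'M[R]_n).

Lemma upper_cocycle_blocks A B D :
  let gamma := block_mx A B 0 D in
  symplectic gamma -> gamma *m tau gamma = 1%:M ->
  [/\ A *m A = 1%:M, D = A^T, B *m A^T = A *m B & (A *m B)^T = A *m B].
Proof.
move=> gamma /symplectic_block[_ symB]; rewrite trmx0 mul0mx subr0 => AtD.
rewrite tau_block mulmx_block (scalar_mx_block n n 1) oppr0 mulmx0 mul0mx.
rewrite !addr0 add0r => /eq_block_mx[AA BD _ _].
have DAt : D = A^T by rewrite -[D]mul1mx -(trmx1 _ n) -AA trmx_mul -mulmxA AtD mulmx1.
split=> //; first by apply/eqP; rewrite -DAt -subr_eq0 addrC -mulmxN BD.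
by rewrite trmx_mul -DAt symB DAt trmxK.
Qed.

Lemma cohomologous_upper_diag A B : A *m A = 1%:M -> B *m A^T = A *m B ->
  let k := block_mx 1%:M (- (2^-1 *: (A *m B))) 0 1%:M in
  tau k *m block_mx A 0 0 A^T = block_mx A B 0 A^T *m k.
Proof.
move=> AA BA k; rewrite tau_block oppr0 opprK !mulmx_block.
rewrite !mul0mx !mulmx0 !mul1mx !mulmx1 !addr0 !add0r; congr block_mx.
rewrite -scalemxAl -mulmxA BA mulmxA AA mul1mx mulmxN -scalemxAr mulmxA AA mul1mx.
by rewrite -{3}[B]scale_halfD scalerDr addKr.
Qed.

End UpperTriangular.

Theorem lemma3p10 (R : realType) (n : nat) (gamma : 'M[R]_(n + n)) :
  symplectic gamma ->
  gamma *m tau gamma = 1%:M ->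
  dlsubmx gamma = 0 ->
  exists h : 'M[R]_(n + n),
    symplectic h /\ h \in unitmx /\ gamma = tau h *m invmx h.
Proof.
move=> + + dl0.
have -> : gamma = block_mx (ulsubmx gamma) (ursubmx gamma) 0 (drsubmx gamma).
  by rewrite -dl0 submxK.
move: (ulsubmx _) (ursubmx _) (drsubmx _) => A B D sym_g cocycle.
have [AA DAt BA symAB] := upper_cocycle_blocks sym_g cocycle.
have [h0 sym_h0 tau_h0] := diag_involution_coboundary AA.
set k := block_mx 1%:M (- (2^-1 *: (A *m B))) 0 1%:M.
have sym_k : symplectic k.
  by apply: symplectic_unipotent; rewrite raddfN /= [(_ *: _)^T]linearZ /= symAB.
have sym_h := symplecticM sym_k sym_h0; have unit_h := symplectic_unitmx sym_h.
exists (k *m h0); do !split => //.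
by rewrite DAt tauM tau_h0 mulmxA cohomologous_upper_diag // -(mulmxA _ k h0) mulmxK.
Qed.
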